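(* Let $k$ be a field and $r$ a positive integer. The free metabelian Lie algebra $F_r$ over $k$ is equationally Noetherian: for every $n\in\mathbb{N}$ and every system $S\subseteq F_r[x_1,\dots,x_n]$ there exists a finite subsystem $S_0\subseteq S$ with $V_{F_r}(S)=V_{F_r}(S_0)$.
   Context: $F_r[X]=F_r\ast F(X)$ is the free product of $F_r$ with the free Lie $k$-algebra on $X=\{x_1,\dots,x_n\}$ (the free $F_r$-algebra on $X$). For $S\subseteq F_r[X]$, $V_{F_r}(S)=\{p\in F_r^n: f(p)=0\ \forall f\in S\}$. *)

From mathcomp Require Import all_boot all_order all_algebra.
Set Implicit Arguments. Unset Strict Implicit. Unset Printing Implicit Defensive.
Import GRing.Theory.
Local Open Scope ring_scope.

Definition is_lie_bracket (K : fieldType) (V : lmodType K) (br : V -> V -> V) : Prop :=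
  [/\ (forall (a : K) (x y z : V), br (a *: x + y) z = a *: br x z + br y z),
      (forall (a : K) (x y z : V), br z (a *: x + y) = a *: br z x + br z y),
      (forall x : V, br x x = 0) &
      (forall x y z : V, br x (br y z) + br y (br z x) + br z (br x y) = 0)].

Definition is_metabelian (K : fieldType) (V : lmodType K) (br : V -> V -> V) : Prop :=
  forall a b c d : V, br (br a b) (br c d) = 0.

Definition is_lie_hom (K : fieldType) (V W : lmodType K)
  (brV : V -> V -> V) (brW : W -> W -> W) (f : V -> W) : Prop :=
  (forall (a : K) (x y : V), f (a *: x + y) = a *: f x + f y) /\
  (forall x y : V, f (brV x y) = brW (f x) (f y)).

Definition is_free_metabelian (K : fieldType) (r : nat) (M : lmodType K)
  (br : M -> M -> M) (e : 'I_r -> M) : Prop :=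
  [/\ is_lie_bracket br, is_metabelian br &
      forall (W : lmodType K) (brW : W -> W -> W),
        is_lie_bracket brW -> is_metabelian brW ->
        forall g : 'I_r -> W,
          (exists phi : M -> W, is_lie_hom br brW phi /\ forall i, phi (e i) = g i) /\
          (forall phi psi : M -> W, is_lie_hom br brW phi -> is_lie_hom br brW psi ->
              (forall i, phi (e i) = g i) -> (forall i, psi (e i) = g i) ->
              forall x, phi x = psi x)].

(* ---------- F_r[X] = F_r * F(X): Lie terms with constants in M ----------
   Every element of the free product F_r * F(x_1..x_n) is the value of such a
   term (F_r * F(X) is generated by F_r and X as a Lie algebra), and the
   evaluation at p in M^n is the F_r-homomorphism F_r[X] -> F_r
   sending x_i to p_i, i.e. term evaluation. *)
Inductive lterm (K : Type) (M : Type) (n : nat) : Type :=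
  | LConst of M
  | LVar of 'I_n
  | LAdd of lterm K M n & lterm K M n
  | LScale of K & lterm K M n
  | LBr of lterm K M n & lterm K M n.

Fixpoint leval (K : fieldType) (M : lmodType K) (br : M -> M -> M) (n : nat)
  (p : 'I_n -> M) (t : lterm K M n) : M :=
  match t with
  | LConst a => a
  | LVar i => p i
  | LAdd t1 t2 => leval br p t1 + leval br p t2
  | LScale c t1 => c *: leval br p t1
  | LBr t1 t2 => br (leval br p t1) (leval br p t2)
  end.

Definition variety (K : fieldType) (M : lmodType K) (br : M -> M -> M) (n : nat)
  (S : lterm K M n -> Prop) (p : 'I_n -> M) : Prop :=
  forall t, S t -> leval br p t = 0.

(* membership of a term in a finite list of terms (terms carry no eqType) *)
Fixpoint lmem (A : Type) (s : seq A) (t : A) : Prop :=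
  match s with
  | [::] => False
  | u :: s' => u = t \/ lmem s' t
  end.

(* Every element of F_r is a linear combination of the generators e_j plus an
   element of the derived algebra D = [F_r, F_r], and since F_r is metabelian D
   is a module over K[t_1, ..., t_r], with t_j acting as [e_j, -].  Decompose the
   coordinates of a point likewise, p_i = sum_l a_il e_l + m_i.  Then a term t
   evaluates at p to sum_j lambda_j(a) e_j + sum_k delta_k(a, t) b_k, where the
   rows lambda in K[a]^r and delta in K[a][t]^N depend on t only and
   b = (m_1, ..., m_n, [e_j, e_l]).  As the e_j are independent modulo D, t vanishes
   at p iff both parts vanish, and these conditions are stable under
   K[a]-, resp. K[a][t]-linear combinations of the rows.  By Hilbert's basis
   theorem these free modules are noetherian, so the rows of finitely many
   equations of S span the rows of all of them. *)

From HB Require Import structures.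
From mathcomp Require Import all_boot all_order all_algebra.
From Stdlib Require Import Classical ClassicalEpsilon.
Set Implicit Arguments. Unset Strict Implicit. Unset Printing Implicit Defensive.
Import GRing.Theory.
Local Open Scope ring_scope.

Lemma choice_with_default (A B : Type) (b0 : B) (P : A -> B -> Prop) :
  exists f : A -> B, forall a, (exists b, P a b) -> P a (f a).
Proof. by exists (fun a => epsilon (inhabits b0) (P a)) => a; apply: epsilon_spec. Qed.

Lemma lmem_cat (T : Type) (s t : seq T) x : lmem (s ++ t) x <-> lmem s x \/ lmem t x.
Proof. by elim: s => [|a s IH] /=; [tauto | rewrite IH; tauto]. Qed.

Lemma lmemE (T : eqType) (s : seq T) x : lmem s x <-> x \in s.
Proof.
elim: s => //= a s ->; rewrite inE; split=> [[->|->]|/orP[/eqP->|]]; rewrite ?eqxx ?orbT; auto.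
Qed.

Lemma lmem_map (A : eqType) (B : Type) (f : A -> B) (s : seq A) a :
  a \in s -> lmem (map f s) (f a).
Proof. by elim: s => //= b s IH; rewrite inE => /orP[/eqP->|/IH]; [left|right]. Qed.

Lemma lmem_mapP (A B : Type) (f : A -> B) (s : seq A) b :
  lmem (map f s) b -> exists2 a, lmem s a & b = f a.
Proof.
elim: s => //= a s IH [<-|/IH [a' Ha' ->]]; first by exists a; [left|].
by exists a'; [right|].
Qed.

Inductive span (R : pzRingType) (V : lmodType R) (S : V -> Prop) : V -> Prop :=
| span_sub x of S x : span S x
| span0 : span S 0
| spanD x y of span S x & span S y : span S (x + y)
| spanZ a x of span S x : span S (a *: x).

Notation span_seq s := (span (fun y => y \in s)).

Section Span.
Variables (R : pzRingType) (V : lmodType R).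
Implicit Types S T : V -> Prop.

Lemma span_min (S Z : V -> Prop) : (forall x, S x -> Z x) -> Z 0 ->
    (forall x y, Z x -> Z y -> Z (x + y)) -> (forall a x, Z x -> Z (a *: x)) ->
  forall x, span S x -> Z x.
Proof. by move=> SZ Z0 ZD ZZ x; elim; auto. Qed.

Lemma sub_span (S T : V -> Prop) : (forall x, S x -> span T x) ->
  forall x, span S x -> span T x.
Proof. by move=> ST; apply: span_min => //; [apply: span0|apply: spanD|apply: spanZ]. Qed.

Lemma span_mono (S T : V -> Prop) : (forall x, S x -> T x) ->
  forall x, span S x -> span T x.
Proof. by move=> ST; apply: sub_span => x /ST; apply: span_sub. Qed.

Lemma spanN S x : span S x -> span S (- x).
Proof. by rewrite -scaleN1r; apply: spanZ. Qed.

Lemma spanB S x y : span S x -> span S y -> span S (x - y).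
Proof. by move=> Sx Sy; apply: spanD => //; apply: spanN. Qed.

Lemma span_catl (s t : seq V) x : span_seq s x -> span_seq (s ++ t) x.
Proof. by apply: span_mono => y; rewrite mem_cat => ->. Qed.

Lemma span_catr (s t : seq V) x : span_seq t x -> span_seq (s ++ t) x.
Proof. by apply: span_mono => y; rewrite mem_cat orbC => ->. Qed.

Lemma span_finite (S : V -> Prop) x : span S x ->
  exists2 s : seq V, (forall y, y \in s -> S y) & span_seq s x.
Proof.
elim=> [y Sy | | a b _ [s Ss Ha] _ [t St Hb] | a y _ [s Ss Hy]].
- exists [:: y]; first by move=> z; rewrite inE => /eqP->.
  by apply: span_sub; rewrite inE.
- by exists [::] => //; apply: span0.
- exists (s ++ t); first by move=> z; rewrite mem_cat => /orP[/Ss|/St].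
  by apply: spanD; [apply: span_catl|apply: span_catr].
- by exists s => //; apply: spanZ.
Qed.

Lemma span_finite_seq (S : V -> Prop) (g : seq V) : (forall x, x \in g -> span S x) ->
  exists2 s : seq V, (forall y, y \in s -> S y) & forall x, x \in g -> span_seq s x.
Proof.
elim: g => [|x g IH] Hg; first by exists [::].
have [s Ss Hs] := IH (fun y yg => Hg y ltac:(by rewrite inE yg orbT)).
have [t St Ht] := span_finite (Hg x (mem_head _ _)).
exists (s ++ t); first by move=> z; rewrite mem_cat => /orP[/Ss|/St].
move=> y; rewrite inE => /orP[/eqP->|yg]; first exact: span_catr.
exact: span_catl (Hs _ yg).
Qed.

Definition subspace (U : V -> Prop) := forall x, span U x -> U x.

Lemma subspaceT : subspace (fun _ => True).
Proof. by []. Qed.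

Definition finitely_spanned (S : V -> Prop) :=
  exists2 s : seq V, (forall x, x \in s -> S x) & forall x, S x -> span_seq s x.

Definition noetherian_on (U : V -> Prop) :=
  forall S, (forall x, S x -> U x) -> finitely_spanned S.

Definition noetherian := forall S, finitely_spanned S.

Lemma noetherian_finite_subfamily (T : Type) (t0 : T) (phi : T -> V) (S : T -> Prop) :
  noetherian -> exists2 S0 : seq T, (forall t, lmem S0 t -> S t) &
    forall t, S t -> span (fun x => exists2 t', lmem S0 t' & x = phi t') (phi t).
Proof.
move=> noethV; have [s sS Hs] := noethV (fun x => exists2 t, S t & x = phi t).
have [pick Hpick] := choice_with_default t0 (fun x t => S t /\ x = phi t).
have pickP x : x \in s -> S (pick x) /\ x = phi (pick x).
  by move=> /sS [t St ->]; apply: Hpick; exists t.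
exists (map pick s).
  move=> t /(@lmem_mapP _ _ pick) [x xs ->].
  by case: (pickP x (proj1 (lmemE _ _) xs)).
move=> t St.
apply: span_mono (Hs _ (ex_intro2 _ _ t St erefl)) => x xs.
by exists (pick x); [apply: lmem_map | case: (pickP x xs)].
Qed.
End Span.

Arguments subspaceT {R V}.

Lemma noetherian_field (K : fieldType) : noetherian K^o.
Proof.
move=> S; have [[x [Sx x_neq0]]|S0] := classic (exists x : K, S x /\ x != 0).
  exists [:: x] => [y|y _]; first by rewrite inE => /eqP->.
  have -> : y = (y / x) *: (x : K^o) by rewrite /GRing.scale /= mulfVK.
  by apply: spanZ; apply: span_sub; rewrite inE.
exists [::] => // y Sy; have [->|y_neq0] := eqVneq y 0; first exact: span0.
by case: S0; exists y.
Qed.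

Lemma seq_uniform_bound (T : eqType) (P : nat -> T -> Prop) (s : seq T) :
    (forall d d' x, (d <= d')%N -> P d x -> P d' x) ->
    (forall x, x \in s -> exists d, P d x) ->
  exists D, forall x, x \in s -> P D x.
Proof.
move=> Pmono; elim: s => [|a s IH] Hs; first by exists 0%N.
have [D HD] := IH (fun y ys => Hs y ltac:(by rewrite inE ys orbT)).
have [d Hd] := Hs a (mem_head _ _).
exists (maxn D d) => y; rewrite inE => /orP[/eqP->|ys].
  by apply: Pmono Hd; rewrite leq_maxr.
by apply: Pmono (HD _ ys); rewrite leq_maxl.
Qed.

Lemma size_cancel_lead (R : nzRingType) (f h : {poly R}) (m d : nat) :
    (size f <= m.+1)%N -> (size h <= d.+1)%N -> (d <= m)%N -> h`_d = f`_m ->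
  (size (f - 'X^(m - d) * h)%R <= m)%N.
Proof.
move=> sf sh dm hf.
have sg : (size (f - 'X^(m - d) * h)%R <= m.+1)%N.
  apply: leq_trans (size_polyD _ _) _; rewrite geq_max sf size_polyN.
  apply: leq_trans (size_polyMleq _ _) _; rewrite size_polyXn addSn /=.
  by rewrite -{2}(subnK dm) -addnS leq_add2l.
rewrite leq_eqVlt in sg; case/orP: sg => [/eqP sg|] //.
have : lead_coef (f - 'X^(m - d) * h) = 0.
  rewrite /lead_coef sg /= coefB coefXnM ltnNge leq_subr /= subKn //.
  by rewrite hf subrr.
by move/eqP; rewrite lead_coef_eq0 => /eqP->; rewrite size_poly0.
Qed.

Section HilbertBasis.
Variable R : comNzRingType.
Hypothesis noethR : noetherian R^o.
Implicit Types (S T : {poly R}^o -> Prop) (f g h : {poly R}^o).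

(* The coefficients of [X^d] in the polynomials of size at most [d.+1] of the
   ideal spanned by [S]: an ascending chain of ideals of [R], which stabilises. *)
Definition coef_ideal S d (c : R^o) :=
  exists2 f, span S f & (size f <= d.+1)%N /\ f`_d = c.

Lemma coef_ideal_span S d c : span (coef_ideal S d) c -> coef_ideal S d c.
Proof.
apply: span_min => //.
- by exists 0; [apply: span0 | rewrite size_poly0 coef0].
- move=> _ _ [f Sf [sf <-]] [g Sg [sg <-]]; exists (f + g); first exact: spanD.
  by rewrite coefD (leq_trans (size_polyD _ _)) // geq_max sf sg.
- move=> a _ [f Sf [sf <-]]; exists (a%:P * f); first exact: (spanZ (a%:P : {poly R}) Sf).
  by rewrite coefCM mul_polyC (leq_trans (size_scale_leq _ _)).
Qed.

Lemma coef_ideal_mono S T d c : (forall f, S f -> span T f) ->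
  coef_ideal S d c -> coef_ideal T d c.
Proof. by move=> ST [f Sf sf]; exists f => //; apply: sub_span Sf. Qed.

Lemma coef_ideal_le S d d' c : (d <= d')%N -> coef_ideal S d c -> coef_ideal S d' c.
Proof.
move=> /subnK <-; elim: (d' - d)%N => // k IH /IH [f Sf [sf <-]].
exists (f * 'X); first by rewrite mulrC; apply: (spanZ ('X : {poly R}) Sf).
rewrite coefMX /= (leq_trans (size_polyMleq _ _)) // size_polyX addn2.
by rewrite addSn.
Qed.

Lemma coef_ideal_stable S : exists D, forall d c,
  coef_ideal S d c -> coef_ideal S (minn d D) c.
Proof.
have [cs csS Hcs] := noethR (fun c => exists d, coef_ideal S d c).
have [D HD] := seq_uniform_bound (@coef_ideal_le S) csS.
exists D => d c Hc; case: leqP => // _; apply: coef_ideal_span.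
by apply: span_mono (Hcs _ (ex_intro _ d Hc)) => y /HD.
Qed.

Lemma coef_ideal_generators S k : exists2 G : seq {poly R}^o,
  (forall g, g \in G -> span S g) &
  forall d, (d < k)%N -> forall c, coef_ideal S d c -> coef_ideal (fun g => g \in G) d c.
Proof.
elim: k => [|k [G GS HG]]; first by exists [::].
have [cs csS Hcs] := noethR (coef_ideal S k).
have [pick Hpick] := choice_with_default 0
  (fun (c : R^o) f => span S f /\ (size f <= k.+1)%N /\ f`_k = c).
have pickP c : c \in cs -> [/\ span S (pick c), (size (pick c) <= k.+1)%N & (pick c)`_k = c].
  by move=> /csS [f Sf [sf fc]]; have [? []] := Hpick c (ex_intro _ f (conj Sf (conj sf fc))).
exists (G ++ map pick cs) => [g|d].
  by rewrite mem_cat => /orP[/GS //|/mapP [c /pickP [] ? _ _ ->]].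
rewrite ltnS leq_eqVlt => /orP[/eqP->|dk] c Hc; last first.
  by apply: coef_ideal_mono (HG _ dk _ Hc) => g Gg; apply: span_sub; rewrite mem_cat Gg.
apply: coef_ideal_span; apply: span_mono (Hcs _ Hc) => c' c'cs.
have [_ s <-] := pickP c' c'cs; exists (pick c') => //.
by apply: span_sub; rewrite mem_cat map_f ?orbT.
Qed.

Lemma span_coef_ideal_generators S D (G : seq {poly R}^o) :
    (forall g, g \in G -> span S g) ->
    (forall d c, coef_ideal S d c -> coef_ideal S (minn d D) c) ->
    (forall d, (d <= D)%N -> forall c, coef_ideal S d c -> coef_ideal (fun g => g \in G) d c) ->
  forall f, span S f -> span_seq G f.
Proof.
move=> GS stab HG f; move: {2}(size f) (leqnn (size f)) => m.
elim: m f => [|m IH] f sf Sf.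
  by move: sf; rewrite leqn0 size_poly_eq0 => /eqP->; apply: span0.
rewrite leq_eqVlt ltnS in sf; case/orP: sf => [/eqP sf|]; last by move/IH; apply.
have [h Gh [sh hf]] : coef_ideal (fun g => g \in G) (minn m D) f`_m.
  by apply: HG; [rewrite geq_minr | apply: stab; exists f => //; rewrite sf].
have Sh : span S h by apply: sub_span Gh => g /GS.
rewrite -(subrK ('X^(m - minn m D) * h) f); apply: spanD.
  apply: IH; last by apply: spanB => //; apply: (spanZ ('X^(m - minn m D) : {poly R}) Sh).
  by apply: size_cancel_lead sh (geq_minl m D) hf; rewrite sf.
exact: (spanZ ('X^(m - minn m D) : {poly R}) Gh).
Qed.

Theorem noetherian_poly : noetherian {poly R}^o.
Proof.
move=> S; have [D stab] := coef_ideal_stable S.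
have [G GS HG] := coef_ideal_generators S D.+1.
have [s sS Hs] := span_finite_seq GS.
exists s => // f Sf; apply: sub_span Hs _ _.
exact: span_coef_ideal_generators GS stab HG _ (span_sub Sf).
Qed.

End HilbertBasis.

Section LinearFunctions.
Variables (R : pzRingType) (U V : lmodType R) (f : U -> V).
Hypothesis f_lin : linear f.

Lemma lin0 : f 0 = 0.
Proof.
have := f_lin 1 0 0; rewrite !scale1r addr0 => E.
by apply: (addrI (f 0)); rewrite addr0 -E.
Qed.

Lemma linD x y : f (x + y) = f x + f y.
Proof. by have := f_lin 1 x y; rewrite !scale1r. Qed.

Lemma linZ a x : f (a *: x) = a *: f x.
Proof. by rewrite -[a *: x]addr0 f_lin lin0 addr0. Qed.

Lemma linN x : f (- x) = - f x.
Proof. by rewrite -scaleN1r linZ scaleN1r. Qed.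

Lemma lin_sum (I : Type) (s : seq I) (P : pred I) (F : I -> U) :
  f (\sum_(i <- s | P i) F i) = \sum_(i <- s | P i) f (F i).
Proof. exact: (big_morph f linD lin0). Qed.

Lemma span_image_lift (T : U -> Prop) w :
  span (fun w => exists2 x, T x & f x = w) w -> exists2 x, span T x & f x = w.
Proof.
elim=> [_ [x Tx <-] | | _ _ _ [x Tx <-] _ [y Ty <-] | a _ _ [x Tx <-]].
- by exists x => //; apply: span_sub.
- by exists 0; [apply: span0 | rewrite lin0].
- by exists (x + y); [apply: spanD | rewrite linD].
- by exists (a *: x); [apply: spanZ | rewrite linZ].
Qed.

End LinearFunctions.

Section Extension.
Variables (R : pzRingType) (V W : lmodType R) (f : V -> W) (U : V -> Prop).
Hypotheses (f_lin : linear f) (U_subspace : subspace U).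

(* Lift a finite spanning set of [f @ S] to [xs] in [S]; what remains of [S] after
   subtracting elements of the span of [xs] lies in the kernel. *)
Lemma noetherian_on_extension :
  noetherian W -> noetherian_on (fun x => U x /\ f x = 0) -> noetherian_on U.
Proof.
move=> noethW noeth_ker S SU.
have [ws wsS Hws] := noethW (fun w => exists2 x, S x & f x = w).
have [pick Hpick] := choice_with_default 0 (fun w x => S x /\ f x = w).
have pickP w : w \in ws -> S (pick w) /\ f (pick w) = w.
  by move=> /wsS [x Sx fx]; apply: Hpick; exists x.
pose xs := map pick ws.
have xsS x : x \in xs -> S x by case/mapP=> w /pickP [Sx _] ->.
have lift x : S x -> exists2 y, span_seq xs y & f y = f x.
  move=> Sx; apply: span_image_lift => //; apply: span_mono (Hws _ (ex_intro2 _ _ x Sx erefl)).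
  by move=> w wws; exists (pick w); [apply: map_f | case: (pickP w wws)].
pose corr z x := S x /\ exists2 y, span_seq xs y & f x = f y /\ z = x - y.
have [zs zsS Hzs] : finitely_spanned (fun z => exists x, corr z x).
  apply: noeth_ker => _ [x [Sx [y xsy [fxy ->]]]]; split; last by rewrite linD // linN // fxy subrr.
  apply/U_subspace/spanB; first by apply: span_sub; apply: SU.
  by apply: sub_span xsy => z /xsS /SU /span_sub.
have [pick' Hpick'] := choice_with_default 0 corr.
exists (xs ++ map pick' zs) => [x|x Sx].
  by rewrite mem_cat => /orP[/xsS //|/mapP [z /zsS /Hpick' [Sx _] ->]].
have [y xsy fy] := lift x Sx; rewrite -(subrK y x); apply: spanD; last exact: span_catl.
apply: sub_span (Hzs _ _); last by exists x; split=> //; exists y.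
move=> z zzs; have [_ [y' xsy' [_ ->]]] := Hpick' z (zsS z zzs).
by apply: spanB; [apply: span_sub; rewrite mem_cat map_f ?orbT | apply: span_catl].
Qed.

End Extension.

Section Rows.
Variables (R : pzRingType) (m : nat).
Hypothesis noethR : noetherian R^o.

Definition row_support k (x : 'rV[R]_m) : Prop := forall j : 'I_m, (k <= j)%N -> x 0 j = 0.

Lemma noetherian_on_row_support k : noetherian_on (row_support k).
Proof.
elim: k => [|k IH].
  move=> S S0; exists [::] => // x /S0 x0.
  have -> : x = 0 by apply/rowP => j; rewrite mxE x0.
  exact: span0.
case: (ltnP k m) => [km|mk]; last first.
  by move=> S _; apply: IH => x _ j kj; have := leq_trans mk kj; rewrite leqNgt ltn_ord.
apply: (@noetherian_on_extension _ _ _ (fun x : 'rV[R]_m => x 0 (Ordinal km) : R^o)) => //.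
- by move=> a x y; rewrite !mxE.
- apply: span_min => [x //|j _|x y xk yk j kj|a x xk j kj]; rewrite !mxE //.
    by rewrite xk // yk // addr0.
  by rewrite xk // mulr0.
move=> S SK; apply: IH => x /SK [xk xk0] j; rewrite leq_eqVlt => /orP[/eqP kj|]; last exact: xk.
by rewrite (_ : j = Ordinal km) //; apply: val_inj.
Qed.

Theorem noetherian_row : noetherian 'rV[R]_m.
Proof. by move=> S; apply: (@noetherian_on_row_support m) => x _ j; rewrite leqNgt ltn_ord. Qed.

End Rows.

Section ModuleAction.
Variables (R : comPzRingType) (V : lmodType R) (U : V -> Prop).
Hypothesis U_subspace : subspace U.

Lemma subspace_sum (I : Type) (s : seq I) (P : pred I) (F : I -> V) :
  (forall i, P i -> U (F i)) -> U (\sum_(i <- s | P i) F i).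
Proof.
move=> UF; apply: U_subspace; elim/big_rec: _ => [|i x Pi Ux]; first exact: span0.
exact/spanD/Ux/span_sub/UF.
Qed.

(* Adjoining a commuting operator [L] as a polynomial variable
   ([horner_act_module]) restricts [Ops] to the operators commuting with [L]. *)
Record module_action (B : comNzRingType) (act : B -> V -> V) (Ops : (V -> V) -> Prop) : Prop := {
  mact_linear : forall b, linear (act b);
  mactD : forall b c v, act (b + c) v = act b v + act c v;
  mact1 : forall v, act 1 v = v;
  mactM : forall b c v, U v -> act (b * c) v = act b (act c v);
  mact_stable : forall b v, U v -> U (act b v);
  mact_comm : forall b L v, Ops L -> U v -> act b (L v) = L (act b v);
  mact_ops_linear : forall L, Ops L -> linear L }.

Lemma module_action_sub B act (O1 O2 : (V -> V) -> Prop) : @module_action B act O1 ->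
  (forall L, O2 L -> O1 L) -> module_action act O2.
Proof. by case=> *; split; auto. Qed.

Lemma mact0 B act O : @module_action B act O -> forall v, act 0 v = 0.
Proof.
move=> Hact v; have := mactD Hact 0 0 v; rewrite addr0 => E.
by apply: (addrI (act 0 v)); rewrite addr0 -E.
Qed.

Section Horner.
Variables (B : comNzRingType) (act : B -> V -> V) (Ops : (V -> V) -> Prop) (L : V -> V).
Hypotheses (Hact : module_action act Ops) (OpsL : Ops L) (L_stable : forall v, U v -> U (L v)).
Implicit Types (p q : {poly B}) (v w : V).

Definition horner_act (p : {poly B}) (v : V) : V :=
  \sum_(i < size p) act p`_i (iter i L v).

Let L_linear : linear L := mact_ops_linear Hact OpsL.

Lemma iter_stable i v : U v -> U (iter i L v).
Proof. by elim: i => //= i IH Uv; apply/L_stable/IH. Qed.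

Lemma iter_linear i : linear (iter i L).
Proof. by elim: i => [|i IH] a x y //=; rewrite IH L_linear. Qed.

Lemma horner_act_widen p v n : (size p <= n)%N ->
  horner_act p v = \sum_(i < n) act p`_i (iter i L v).
Proof.
move=> spn; rewrite /horner_act (big_ord_widen n (fun i => act p`_i (iter i L v)) spn).
rewrite big_mkcond; apply: eq_bigr => i _; case: ltnP => // pi.
by rewrite nth_default // (mact0 Hact).
Qed.

Lemma horner_act_linear p : linear (horner_act p).
Proof.
move=> a x y; rewrite /horner_act scaler_sumr -big_split; apply: eq_bigr => i _ /=.
by rewrite iter_linear (mact_linear Hact).
Qed.

Lemma horner_actD p q v : horner_act (p + q) v = horner_act p v + horner_act q v.
Proof.
pose n := maxn (size p) (size q).
rewrite (@horner_act_widen (p + q) v n) ?(@horner_act_widen p v n)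
  ?(@horner_act_widen q v n) ?leq_maxl ?leq_maxr ?size_polyD //.
by rewrite -big_split; apply: eq_bigr => i _; rewrite coefD (mactD Hact).
Qed.

Lemma horner_act0 v : horner_act 0 v = 0.
Proof. by rewrite /horner_act size_poly0 big_ord0. Qed.

Lemma horner_actC c v : horner_act c%:P v = act c v.
Proof. by rewrite (@horner_act_widen _ v 1) ?size_polyC ?leq_b1 // big_ord1 coefC. Qed.

Lemma horner_actX v : horner_act 'X v = L v.
Proof.
rewrite (@horner_act_widen _ v 2) ?size_polyX // big_ord_recl big_ord1 !coefX /=.
by rewrite (mact0 Hact) add0r (mact1 Hact).
Qed.

Lemma horner_actMX p v : horner_act (p * 'X) v = horner_act p (L v).
Proof.
rewrite (@horner_act_widen _ v (size p).+1); last first.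
  by rewrite (leq_trans (size_polyMleq _ _)) // size_polyX addn2.
rewrite big_ord_recl coefMX /= (mact0 Hact) add0r /horner_act; apply: eq_bigr => i _.
by rewrite /bump leq0n add1n coefMX /= -iterS iterSr.
Qed.

Lemma horner_actCM c p v : U v -> horner_act (c%:P * p) v = act c (horner_act p v).
Proof.
move=> Uv; rewrite (@horner_act_widen _ v (size p)); last by rewrite mul_polyC size_scale_leq.
rewrite /horner_act (lin_sum (mact_linear Hact c)); apply: eq_bigr => i _.
by rewrite coefCM (mactM Hact) //; apply: iter_stable.
Qed.

Lemma horner_act_stable p v : U v -> U (horner_act p v).
Proof. by move=> Uv; apply: subspace_sum => i _; apply/(mact_stable Hact)/iter_stable. Qed.

Lemma horner_act_comm p L' v : Ops L' -> (forall w, U w -> L (L' w) = L' (L w)) ->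
  (forall w, U w -> U (L' w)) -> U v -> horner_act p (L' v) = L' (horner_act p v).
Proof.
move=> OpsL' LL' L'_stable Uv.
have iterL' j : iter j L (L' v) = L' (iter j L v).
  by elim: j => //= j ->; rewrite LL' //; apply: iter_stable.
rewrite /horner_act (lin_sum (mact_ops_linear Hact OpsL')); apply: eq_bigr => i _.
by rewrite iterL' (mact_comm Hact) //; apply: iter_stable.
Qed.

Lemma horner_actM p q v : U v -> horner_act (p * q) v = horner_act p (horner_act q v).
Proof.
elim/poly_ind: p q v => [|p c IH] q v Uv; first by rewrite mul0r !horner_act0.
rewrite mulrDl !horner_actD horner_actCM // horner_actC horner_actMX.
have -> : p * 'X * q = p * (q * 'X) by rewrite mulrAC mulrA.
rewrite IH // horner_actMX.
by rewrite (horner_act_comm _ OpsL) //; apply: horner_act_stable.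
Qed.

Lemma horner_act_module : module_action horner_act
  (fun L' => [/\ Ops L', forall w, U w -> L (L' w) = L' (L w) & forall w, U w -> U (L' w)]).
Proof.
split.
- exact: horner_act_linear.
- exact: horner_actD.
- by move=> v; rewrite -polyC1 horner_actC (mact1 Hact).
- exact: horner_actM.
- exact: horner_act_stable.
- by move=> p L' v [OpsL' LL' L'_stable]; apply: horner_act_comm.
- by move=> L' [OpsL' _ _]; apply: (mact_ops_linear Hact).
Qed.

End Horner.
End ModuleAction.

Fixpoint polyn (B : comNzRingType) (k : nat) : comNzRingType :=
  if k is k'.+1 then {poly polyn B k'} else B.

Lemma noetherian_polyn (B : comNzRingType) k : noetherian B^o -> noetherian (polyn B k)^o.
Proof. by move=> noethB; elim: k => //= k IH; apply: noetherian_poly. Qed.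

Fixpoint polyn_const (B : comNzRingType) (k : nat) : B -> polyn B k :=
  if k is k'.+1 then fun c => (polyn_const k' c)%:P else id.

(* [t_j], or 0 if [k <= j]. *)
Fixpoint polyn_var (B : comNzRingType) (k j : nat) : polyn B k :=
  if k is k'.+1 then (if j == k' then 'X else (polyn_var B k' j)%:P) else 0.

Section PolynAction.
Variables (R : comPzRingType) (V : lmodType R) (U : V -> Prop).
Hypothesis U_subspace : subspace U.
Variables (B : comNzRingType) (act : B -> V -> V) (Ops : (V -> V) -> Prop) (T : nat -> V -> V).
Hypotheses (Hact : module_action U act Ops) (OpsT : forall j, Ops (T j))
  (T_stable : forall j v, U v -> U (T j v))
  (T_comm : forall i j v, U v -> T i (T j v) = T j (T i v)).

Fixpoint polyn_act k : polyn B k -> V -> V :=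
  if k is k'.+1 then horner_act (@polyn_act k') (T k') else act.

Definition polyn_ops k L := [/\ Ops L,
  forall j, (j < k)%N -> forall v, U v -> T j (L v) = L (T j v) & forall v, U v -> U (L v)].

Lemma polyn_act_module k : module_action U (@polyn_act k) (polyn_ops k).
Proof.
elim: k => [|k IH] /=; first by apply: (module_action_sub Hact) => L [].
have opsT : polyn_ops k (T k).
  by split=> [|j _ v Uv|v /T_stable]; [apply: OpsT | apply: T_comm |].
apply: (module_action_sub (horner_act_module U_subspace IH opsT (T_stable k))).
move=> L [OpsL TL L_stable].
split=> //; first by split=> // j jk; apply: TL (ltnW jk).
by move=> v Uv; apply: TL.
Qed.

Lemma polyn_act_const k c v : polyn_act (polyn_const k c) v = act c v.
Proof. by elim: k => //= k IH; rewrite (horner_actC _ (polyn_act_module k)). Qed.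

Lemma polyn_act_var k j v : (j < k)%N -> polyn_act (polyn_var B k j) v = T j v.
Proof.
elim: k => // k IH /=; rewrite ltnS leq_eqVlt => /orP[/eqP->|jk].
  by rewrite eqxx (horner_actX _ (polyn_act_module k)).
by rewrite ltn_eqF // (horner_actC _ (polyn_act_module k)) IH.
Qed.

End PolynAction.

Arguments polyn_act {R V B} act T {k}.

Section RowCombination.
Variables (R : comPzRingType) (V : lmodType R) (U : V -> Prop).
Hypothesis U_subspace : subspace U.
Variables (B : comNzRingType) (act : B -> V -> V) (Ops : (V -> V) -> Prop).
Hypothesis (Hact : module_action U act Ops).
Variables (q : nat) (u : 'I_q -> V).
Hypothesis U_u : forall k, U (u k).

Definition row_comb (x : 'rV[B]_q) : V := \sum_k act (x 0 k) (u k).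

Lemma row_comb0 : row_comb 0 = 0.
Proof. by rewrite /row_comb big1 // => k _; rewrite mxE (mact0 Hact). Qed.

Lemma row_combD x y : row_comb (x + y) = row_comb x + row_comb y.
Proof. by rewrite /row_comb -big_split; apply: eq_bigr => k _; rewrite mxE (mactD Hact). Qed.

Lemma row_combN x : row_comb (- x) = - row_comb x.
Proof. by apply/eqP; rewrite -addr_eq0 -row_combD addNr row_comb0. Qed.

Lemma row_comb_sum (I : Type) (s : seq I) (P : pred I) (F : I -> 'rV[B]_q) :
  row_comb (\sum_(i <- s | P i) F i) = \sum_(i <- s | P i) row_comb (F i).
Proof. exact: (big_morph _ row_combD row_comb0). Qed.

Lemma row_combZ b x : row_comb (b *: x) = act b (row_comb x).
Proof.
rewrite /row_comb (lin_sum (mact_linear Hact b)); apply: eq_bigr => k _.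
by rewrite mxE (mactM Hact).
Qed.

Lemma row_comb_stable x : U (row_comb x).
Proof. by apply: (subspace_sum U_subspace) => k _; apply: (mact_stable Hact). Qed.

Lemma row_comb_delta k : row_comb (delta_mx 0 k) = u k.
Proof.
rewrite /row_comb (bigD1 k) //= big1 => [|j jk]; first by rewrite mxE !eqxx (mact1 Hact) addr0.
by rewrite mxE (negbTE jk) andbF (mact0 Hact).
Qed.

Lemma row_comb_span_eq0 (S : 'rV[B]_q -> Prop) : (forall x, S x -> row_comb x = 0) ->
  forall x, span S x -> row_comb x = 0.
Proof.
move=> S0; apply: span_min => //; first exact: row_comb0.
  by move=> x y x0 y0; rewrite row_combD x0 y0 addr0.
by move=> b x x0; rewrite row_combZ x0 (lin0 (mact_linear Hact b)).
Qed.

End RowCombination.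

Section ScaleAction.
Variables (R : comNzRingType) (V : lmodType R) (U : V -> Prop).
Hypothesis U_subspace : subspace U.

Definition scale_ops (L : V -> V) := linear L /\ forall v, U v -> U (L v).

Lemma scale_action : module_action U (fun c v => c *: v) scale_ops.
Proof.
split.
- by move=> b a x y; rewrite scalerDr !scalerA mulrC.
- by move=> b c v; rewrite scalerDl.
- by move=> v; rewrite scale1r.
- by move=> b c v _; rewrite scalerA.
- by move=> b v Uv; apply/U_subspace/spanZ/span_sub.
- by move=> b L v [L_lin _] _; rewrite linZ.
- by move=> L [].
Qed.

Variable alpha : nat -> R.

Fixpoint polyn_eval k : polyn R k -> R :=
  if k is k'.+1 then fun p => \sum_(i < size p) polyn_eval p`_i * alpha k' ^+ i else id.

Lemma polyn_act_scale k (c : polyn R k) (v : V) :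
  polyn_act (fun c v => c *: v) (fun j v => alpha j *: v) c v = polyn_eval c *: v.
Proof.
elim: k c v => //= k IH c v; rewrite /horner_act scaler_suml; apply: eq_bigr => i _.
rewrite IH -scalerA; congr (_ *: _); elim: (nat_of_ord i) => /= [|j ->]; first by rewrite scale1r.
by rewrite scalerA exprS mulrC.
Qed.

End ScaleAction.

Section MetabelianLie.
Variables (K : fieldType) (r : nat) (M : lmodType K) (br : M -> M -> M) (e : 'I_r -> M).
Hypotheses (Hlie : is_lie_bracket br) (Hmeta : is_metabelian br).

Lemma br_linearl y : linear (br^~ y).
Proof. by case: Hlie => brl _ _ _ a x z /=; rewrite brl. Qed.

Lemma br_linearr x : linear (br x).
Proof. by case: Hlie => _ brr _ _ a u v; apply: brr. Qed.

Lemma br_anticomm x y : br x y = - br y x.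
Proof.
case: Hlie => _ _ brxx _; apply/eqP; rewrite -addr_eq0; have := brxx (x + y).
by rewrite (linD (br_linearl _)) !(linD (br_linearr _)) !brxx add0r addr0 => ->.
Qed.

(* In the free metabelian algebra this is the derived algebra [F_r, F_r]. *)
Inductive derived : M -> Prop :=
| derived_br i j : derived (br (e i) (e j))
| derived0 : derived 0
| derivedD x y of derived x & derived y : derived (x + y)
| derivedZ a x of derived x : derived (a *: x)
| derived_ad i x of derived x : derived (br (e i) x).

Lemma derived_sum (I : Type) (s : seq I) (P : pred I) (F : I -> M) :
  (forall i, P i -> derived (F i)) -> derived (\sum_(i <- s | P i) F i).
Proof.
move=> DF; elim/big_rec: _ => [|i x Pi Dx]; first exact: derived0.
exact: derivedD (DF _ Pi) Dx.
Qed.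

Lemma br_br_derived a b d : derived d -> br (br a b) d = 0.
Proof.
elim=> [i j | | x y _ x0 _ y0 | c x _ x0 | i x _ _]; rewrite ?Hmeta //.
- exact: (lin0 (br_linearr _)).
- by rewrite (linD (br_linearr _)) x0 y0 addr0.
- by rewrite (linZ (br_linearr _)) x0 scaler0.
Qed.

Lemma br_derived d d' : derived d -> derived d' -> br d d' = 0.
Proof.
move=> Dd Dd'; elim: Dd => [i j | | x y _ x0 _ y0 | c x _ x0 | i x _ _]; rewrite ?br_br_derived //.
- exact: (lin0 (br_linearl _)).
- by rewrite (linD (br_linearl _)) x0 y0 addr0.
- by rewrite (linZ (br_linearl _)) x0 scaler0.
Qed.

Lemma ad_comm_derived i j d : derived d -> br (e i) (br (e j) d) = br (e j) (br (e i) d).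
Proof.
case: Hlie => _ _ _ jacobi Dd; have := jacobi (e i) (e j) d.
rewrite (br_derived Dd (derived_br i j)) addr0 (br_anticomm d (e i)) (linN (br_linearr _)).
by move/eqP; rewrite subr_eq0 => /eqP.
Qed.

Definition decomposable x :=
  exists c : 'I_r -> K, exists2 d, derived d & x = \sum_j c j *: e j + d.

Lemma derived_decomposable d : derived d -> decomposable d.
Proof. by exists (fun _ => 0), d => //; rewrite big1 ?add0r // => j _; rewrite scale0r. Qed.

Lemma gen_decomposable i : decomposable (e i).
Proof.
exists (fun j => (j == i)%:R), 0; first exact: derived0.
rewrite addr0 (bigD1 i) //= eqxx scale1r big1 ?addr0 // => j /negbTE ->.
by rewrite scale0r.
Qed.

Lemma derived_br_decomposable x y : decomposable x -> decomposable y -> derived (br x y).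
Proof.
have br_gen j z : decomposable z -> derived (br (e j) z).
  case=> c [d Dd ->]; rewrite (linD (br_linearr _)) (lin_sum (br_linearr _)).
  apply: derivedD; last exact: derived_ad.
  by apply: derived_sum => l _; rewrite (linZ (br_linearr _)); apply/derivedZ/derived_br.
move=> [c [d Dd ->]] Hy; rewrite (linD (br_linearl _)) (lin_sum (br_linearl _)).
apply: derivedD.
  by apply: derived_sum => j _; rewrite (linZ (br_linearl _)); apply/derivedZ/br_gen.
have [c' [d' Dd' ->]] := Hy.
rewrite (linD (br_linearr _)) (br_derived Dd Dd') addr0 (lin_sum (br_linearr _)).
apply: derived_sum => j _; rewrite (linZ (br_linearr _)) br_anticomm.
by rewrite -scaleN1r; apply/derivedZ/derivedZ/derived_ad.
Qed.

(* A boolean version, to carve out the decomposable elements as a sub-Lie algebra. *)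
Definition decomposableb : {pred M} :=
  fun x => if excluded_middle_informative (decomposable x) then true else false.

Lemma decomposableP x : reflect (decomposable x) (decomposableb x).
Proof. by rewrite /decomposableb; case: excluded_middle_informative; constructor. Qed.

Lemma decomposable_submod_closed : submod_closed decomposableb.
Proof.
split; first by apply/decomposableP/derived_decomposable/derived0.
move=> a _ _ /decomposableP[c [d Dd ->]] /decomposableP[c' [d' Dd' ->]]; apply/decomposableP.
exists (fun j => a * c j + c' j), (a *: d + d'); first exact/derivedD/Dd'/derivedZ.
rewrite scalerDr scaler_sumr addrACA -big_split /=; congr (_ + _).
by apply: eq_bigr => j _; rewrite scalerA scalerDl.
Qed.

HB.instance Definition _ :=
  GRing.isSubmodClosed.Build K M decomposableb decomposable_submod_closed.

Inductive decomposable_sub : predArgType := DecomposableSub x of x \in decomposableb.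
Definition decomposable_val w : M := let: DecomposableSub x _ := w in x.
HB.instance Definition _ := [isSub for decomposable_val].
HB.instance Definition _ := [Choice of decomposable_sub by <:].
HB.instance Definition _ := [SubChoice_isSubZmodule of decomposable_sub by <:].
HB.instance Definition _ := [SubZmodule_isSubLmodule of decomposable_sub by <:].

Lemma br_sub_decomposable (x y : decomposable_sub) : br (val x) (val y) \in decomposableb.
Proof.
apply/decomposableP/derived_decomposable/derived_br_decomposable; exact/decomposableP/valP.
Qed.

Definition br_sub (x y : decomposable_sub) : decomposable_sub :=
  Sub (br (val x) (val y)) (br_sub_decomposable x y).

Lemma br_sub_lie : is_lie_bracket br_sub.
Proof.
have [brl brr brxx jacobi] := Hlie.
by split=> *; apply: val_inj => /=; rewrite ?brl ?brr ?brxx ?jacobi.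
Qed.

Lemma br_sub_metabelian : is_metabelian br_sub.
Proof. by move=> *; apply: val_inj; apply: Hmeta. Qed.

End MetabelianLie.

Section FreeMetabelian.
Variables (K : fieldType) (r : nat) (M : lmodType K) (br : M -> M -> M) (e : 'I_r -> M).
Hypothesis Hfree : is_free_metabelian br e.

Lemma free_lie : is_lie_bracket br. Proof. by case: Hfree. Qed.
Lemma free_metabelian : is_metabelian br. Proof. by case: Hfree. Qed.

(* Both [id] and [val \o phi] extend [e], where [phi] extends [e] into the
   subalgebra of decomposable elements. *)
Lemma free_decomposable x : decomposable br e x.
Proof.
have [_ _ univ] := Hfree.
have [[phi [[phi_lin phi_br] phi_e]] _] := univ _ _ (br_sub_lie e free_lie free_metabelian)
  (br_sub_metabelian (e := e) free_lie free_metabelian)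
  (fun i => Sub (e i) (introT (decomposableP br e _) (gen_decomposable br e i))).
have [_ uniq] := univ M br free_lie free_metabelian e.
have -> : x = val (phi x).
  apply: (uniq id (val \o phi)) => // [|i]; last by rewrite /= phi_e.
  by split=> [a y z|y z] /=; rewrite ?phi_lin ?phi_br.
exact/decomposableP/valP.
Qed.

(* Map [M] onto the abelian Lie algebra [K^r], sending [e i] to the i-th unit vector. *)
Lemma free_decomposition_unique (c : 'I_r -> K) d : derived br e d ->
  \sum_j c j *: e j + d = 0 -> (forall j, c j = 0) /\ d = 0.
Proof.
move=> Dd sum0; have [_ _ univ] := Hfree.
have zero_lie : is_lie_bracket (fun _ _ : 'rV[K]_r => 0).
  by split=> *; rewrite ?scaler0 ?addr0.
have [[phi [[phi_lin phi_br] phi_e]] _] := univ _ _ zero_lie (fun _ _ _ _ => erefl)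
  (fun i => delta_mx 0 i).
have phi_d : phi d = 0.
  by elim: Dd => [i j | | x y _ x0 _ y0 | a x _ x0 | i x _ _];
    rewrite ?phi_br ?(lin0 phi_lin) ?(linD phi_lin) ?(linZ phi_lin) ?x0 ?y0 ?addr0 ?scaler0.
have c0 j : c j = 0.
  have /rowP /(_ j) := congr1 phi sum0.
  rewrite (linD phi_lin) phi_d addr0 (lin0 phi_lin) (lin_sum phi_lin) !mxE summxE.
  rewrite (bigD1 j) //= big1 => [|k kj]; last first.
    by rewrite (linZ phi_lin) phi_e !mxE eq_sym (negbTE kj) andbF mulr0.
  by rewrite (linZ phi_lin) phi_e !mxE !eqxx mulr1 addr0.
by split=> //; move: sum0; rewrite big1 ?add0r // => j _; rewrite c0 scale0r.
Qed.

Lemma free_point_decomposition n (p : 'I_n -> M) :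
  exists c : 'I_n -> 'I_r -> K, exists2 m : 'I_n -> M,
    (forall i, derived br e (m i)) & forall i, p i = \sum_l c i l *: e l + m i.
Proof.
have [dec Hdec] := choice_with_default ((fun _ => 0), 0)
  (fun x (cd : ('I_r -> K) * M) => derived br e cd.2 /\ x = \sum_l cd.1 l *: e l + cd.2).
have decP x : derived br e (dec x).2 /\ x = \sum_l (dec x).1 l *: e l + (dec x).2.
  by apply: Hdec; have [c [d Dd xE]] := free_decomposable x; exists (c, d).
by exists (fun i => (dec (p i)).1), (fun i => (dec (p i)).2) => i; case: (decP (p i)).
Qed.

End FreeMetabelian.

Section Translation.
Variables (K : fieldType) (r : nat) (M : lmodType K) (br : M -> M -> M) (e : 'I_r -> M) (n : nat).
Hypothesis Hfree : is_free_metabelian br e.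
Let Hlie := free_lie Hfree.
Let Hmeta := free_metabelian Hfree.
Local Notation derived := (derived br e).

(* [coord_ring] is [K[a_il]], [a_il] standing for the coefficient of [e l] in the
   value of [x_i]; [op_ring] is [coord_ring[t_1, ..., t_r]], [t_j] acting on the
   derived algebra as [br (e j)]. *)
Definition ncoords := #|{: 'I_n * 'I_r}|.
Definition coord_ring := polyn K ncoords.
Definition op_ring := polyn coord_ring r.
Definition coord_var (i : 'I_n) (l : 'I_r) : coord_ring := polyn_var K ncoords (enum_rank (i, l)).
Definition coord_const (a : K) : coord_ring := polyn_const ncoords a.
Definition ad_var (j : 'I_r) : op_ring := polyn_var coord_ring r j.
Definition op_const (a : coord_ring) : op_ring := polyn_const r a.

(* Indices of the [op_ring]-generators of the derived part of a value: the derived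
   parts of the [x_i], then the [br (e j) (e l)]. *)
Definition nbasis := (n + #|{: 'I_r * 'I_r}|)%N.
Definition var_index (i : 'I_n) : 'I_nbasis := lshift _ i.
Definition br_index (j l : 'I_r) : 'I_nbasis := rshift n (enum_rank (j, l)).

Definition translation := ('rV[coord_ring]_r * 'rV[op_ring]_nbasis)%type.

Definition br_gens_row (l1 l2 : 'rV[coord_ring]_r) : 'rV[op_ring]_nbasis :=
  \sum_j \sum_l op_const (l1 0 j * l2 0 l) *: delta_mx 0 (br_index j l).

Definition ad_row (l : 'rV[coord_ring]_r) (d : 'rV[op_ring]_nbasis) : 'rV[op_ring]_nbasis :=
  \sum_j (op_const (l 0 j) * ad_var j) *: d.

(* [br (sum_j a_j e_j + d) (sum_l a'_l e_l + d')] expands to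
   [sum_j sum_l a_j a'_l br (e j) (e l) + sum_j a_j br (e j) d' - sum_l a'_l br (e l) d],
   because derived elements commute. *)
Fixpoint translate (tc : M -> translation) (t : lterm K M n) : translation :=
  match t with
  | LConst x => tc x
  | LVar i => (\row_l coord_var i l, delta_mx 0 (var_index i))
  | LAdd t1 t2 =>
      ((translate tc t1).1 + (translate tc t2).1, (translate tc t1).2 + (translate tc t2).2)
  | LScale a t1 =>
      (coord_const a *: (translate tc t1).1, op_const (coord_const a) *: (translate tc t1).2)
  | LBr t1 t2 =>
      (0, br_gens_row (translate tc t1).1 (translate tc t2).1
          + ad_row (translate tc t1).1 (translate tc t2).2
          - ad_row (translate tc t2).1 (translate tc t1).2)
  end.

Implicit Type c : 'I_n -> 'I_r -> K.

(* Indices out of range never occur; [coord_value] and [ad_op] give junk there. *)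
Definition coord_value c (j : nat) : K :=
  if (insub j : option 'I_ncoords) is Some o then let: (i, l) := enum_val o in c i l else 0.

Definition coord_scale c (j : nat) (v : M) : M := coord_value c j *: v.

Definition ad_op (j : nat) : M -> M := if (insub j : option 'I_r) is Some i then br (e i) else id.

Definition coord_act c : coord_ring -> M -> M := polyn_act (fun a v => a *: v) (coord_scale c).
Definition op_act c : op_ring -> M -> M := polyn_act (coord_act c) ad_op.

Definition basis_vec (m : 'I_n -> M) (k : 'I_nbasis) : M :=
  match split k with inl i => m i | inr o => let: (j, l) := enum_val o in br (e j) (e l) end.

Definition lin_part c (x : 'rV[coord_ring]_r) : M := row_comb (coord_act c) e x.
Definition der_part c m (x : 'rV[op_ring]_nbasis) : M := row_comb (op_act c) (basis_vec m) x.

Lemma derived_subspace : subspace derived.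
Proof. by apply: span_min => //; [apply: derived0 | apply: derivedD | apply: derivedZ]. Qed.

Section CoordAction.
Variable c : 'I_n -> 'I_r -> K.
Implicit Types (U : M -> Prop) (v : M).

Let scale_stable U (U_subspace : subspace U) a v : U v -> U (a *: v).
Proof. by move=> Uv; apply/U_subspace/spanZ/span_sub. Qed.

Let coord_scale_ops U (U_subspace : subspace U) j : scale_ops U (coord_scale c j).
Proof.
by split=> [a x y|v]; [rewrite /coord_scale scalerDr !scalerA mulrC | apply: scale_stable].
Qed.

Let coord_scale_comm i j v :
  coord_scale c i (coord_scale c j v) = coord_scale c j (coord_scale c i v).
Proof. by rewrite /coord_scale !scalerA mulrC. Qed.

Lemma coord_act_module U : subspace U ->
  module_action U (coord_act c) (polyn_ops U (scale_ops U) (coord_scale c) ncoords).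
Proof.
move=> U_subspace; apply: (polyn_act_module U_subspace (scale_action U_subspace)
  (coord_scale_ops U_subspace) (fun j => scale_stable U_subspace _)).
by move=> *; apply: coord_scale_comm.
Qed.

Lemma coord_act_const a v : coord_act c (coord_const a) v = a *: v.
Proof.
by rewrite /coord_act /coord_const (polyn_act_const subspaceT (scale_action subspaceT)
  (coord_scale_ops subspaceT) (fun _ _ _ => I) (fun i j v _ => coord_scale_comm i j v)).
Qed.

Lemma coord_act_var i l v : coord_act c (coord_var i l) v = c i l *: v.
Proof.
rewrite /coord_act /coord_var (polyn_act_var subspaceT (scale_action subspaceT)
  (coord_scale_ops subspaceT) (fun _ _ _ => I) (fun i j v _ => coord_scale_comm i j v)) //.
by rewrite /coord_scale /coord_value valK enum_rankK.
Qed.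

End CoordAction.

Section OpAction.
Variable c : 'I_n -> 'I_r -> K.

Let ad_op_linear j : linear (ad_op j).
Proof. by rewrite /ad_op; case: insubP => [i _ _|_] //; apply: br_linearr. Qed.

Let ad_op_stable j v : derived v -> derived (ad_op j v).
Proof. by rewrite /ad_op; case: insubP => [i _ _|_] //; apply: derived_ad. Qed.

Let ad_op_ops j : polyn_ops derived (scale_ops derived) (coord_scale c) ncoords (ad_op j).
Proof.
split=> [|k _ v _|]; last exact: ad_op_stable.
- by split; [apply: ad_op_linear | apply: ad_op_stable].
- by rewrite /coord_scale (linZ (ad_op_linear j)).
Qed.

Let ad_op_comm i j v : derived v -> ad_op i (ad_op j v) = ad_op j (ad_op i v).
Proof.
rewrite /ad_op; case: insubP => [i' _ _|_]; case: insubP => [j' _ _|_] //.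
exact: ad_comm_derived.
Qed.

Lemma op_act_module : module_action derived (op_act c)
  (polyn_ops derived (polyn_ops derived (scale_ops derived) (coord_scale c) ncoords) ad_op r).
Proof.
exact: (polyn_act_module derived_subspace (coord_act_module c derived_subspace)
  ad_op_ops ad_op_stable ad_op_comm r).
Qed.

Lemma op_act_const a v : op_act c (op_const a) v = coord_act c a v.
Proof.
by rewrite /op_act /op_const (polyn_act_const derived_subspace (coord_act_module c derived_subspace)
  ad_op_ops ad_op_stable ad_op_comm).
Qed.

Lemma op_act_ad j v : op_act c (ad_var j) v = br (e j) v.
Proof.
rewrite /op_act /ad_var (polyn_act_var derived_subspace (coord_act_module c derived_subspace)
  ad_op_ops ad_op_stable ad_op_comm) //.
by rewrite /ad_op valK.
Qed.

End OpAction.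

Lemma coord_act_scale c a v : coord_act c a v = polyn_eval (coord_value c) a *: v.
Proof. exact: polyn_act_scale. Qed.

Lemma br_coord_actl c a x y : br (coord_act c a x) y = coord_act c a (br x y).
Proof. by rewrite !coord_act_scale (linZ (br_linearl Hlie _)). Qed.

Lemma br_coord_actr c a x y : br x (coord_act c a y) = coord_act c a (br x y).
Proof. by rewrite !coord_act_scale (linZ (br_linearr Hlie _)). Qed.

Section Evaluation.
Variables (c : 'I_n -> 'I_r -> K) (m : 'I_n -> M).
Hypothesis m_derived : forall i, derived (m i).

Let lin_module := coord_act_module c subspaceT.
Let der_module := op_act_module c.

Lemma basis_vec_derived k : derived (basis_vec m k).
Proof.
rewrite /basis_vec; case: split => [i|o]; first exact: m_derived.
by case: enum_val => j l; apply: derived_br.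
Qed.

Lemma der_part_derived x : derived (der_part c m x).
Proof. exact: (row_comb_stable derived_subspace der_module basis_vec_derived). Qed.

Lemma lin_partE l : lin_part c l = \sum_j coord_act c (l 0 j) (e j).
Proof. by []. Qed.

Lemma lin_part0 : lin_part c 0 = 0.
Proof. exact: (row_comb0 lin_module). Qed.

Lemma lin_partD x y : lin_part c (x + y) = lin_part c x + lin_part c y.
Proof. exact: (row_combD lin_module). Qed.

Lemma lin_partZ a x : lin_part c (a *: x) = coord_act c a (lin_part c x).
Proof. exact: (row_combZ lin_module). Qed.

Lemma der_part0 : der_part c m 0 = 0.
Proof. exact: (row_comb0 der_module). Qed.

Lemma der_partD x y : der_part c m (x + y) = der_part c m x + der_part c m y.
Proof. exact: (row_combD der_module). Qed.

Lemma der_partN x : der_part c m (- x) = - der_part c m x.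
Proof. exact: (row_combN der_module). Qed.

Lemma der_part_sum (I : Type) (s : seq I) (P : pred I) (F : I -> 'rV[op_ring]_nbasis) :
  der_part c m (\sum_(i <- s | P i) F i) = \sum_(i <- s | P i) der_part c m (F i).
Proof. exact: (row_comb_sum der_module). Qed.

Lemma der_partZ b x : der_part c m (b *: x) = op_act c b (der_part c m x).
Proof. exact: (row_combZ der_module basis_vec_derived). Qed.

Lemma der_part_var i : der_part c m (delta_mx 0 (var_index i)) = m i.
Proof. by rewrite /der_part (row_comb_delta der_module) /basis_vec (unsplitK (inl i)). Qed.

Lemma der_part_br_index j l : der_part c m (delta_mx 0 (br_index j l)) = br (e j) (e l).
Proof.
by rewrite /der_part (row_comb_delta der_module) /basis_vec (unsplitK (inr _)) enum_rankK.
Qed.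

Lemma br_gens_row_eval l1 l2 :
  der_part c m (br_gens_row l1 l2) = br (lin_part c l1) (lin_part c l2).
Proof.
rewrite der_part_sum [lin_part c l1]lin_partE (lin_sum (br_linearl Hlie _)).
apply: eq_bigr => j _; rewrite der_part_sum br_coord_actl lin_partE (lin_sum (br_linearr Hlie _)).
rewrite (lin_sum (mact_linear lin_module _)); apply: eq_bigr => l _.
rewrite der_partZ der_part_br_index op_act_const br_coord_actr.
by rewrite (mactM lin_module).
Qed.

Lemma ad_row_eval l d : der_part c m (ad_row l d) = br (lin_part c l) (der_part c m d).
Proof.
rewrite der_part_sum lin_partE (lin_sum (br_linearl Hlie _)); apply: eq_bigr => j _.
rewrite der_partZ (mactM der_module) ?op_act_const ?op_act_ad ?br_coord_actl //.
exact: der_part_derived.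
Qed.

Lemma lin_der_eq0 l d :
  lin_part c l + der_part c m d = 0 <-> lin_part c l = 0 /\ der_part c m d = 0.
Proof.
split=> [|[-> ->]]; last by rewrite addr0.
rewrite lin_partE; under eq_bigr do rewrite coord_act_scale.
case/(free_decomposition_unique Hfree (der_part_derived d)) => l0 ->; split=> //.
by rewrite big1 // => j _; rewrite l0 scale0r.
Qed.

Lemma lin_part_span_eq0 (T : 'rV[coord_ring]_r -> Prop) :
  (forall l, T l -> lin_part c l = 0) -> forall l, span T l -> lin_part c l = 0.
Proof. exact: (row_comb_span_eq0 lin_module). Qed.

Lemma der_part_span_eq0 (T : 'rV[op_ring]_nbasis -> Prop) :
  (forall d, T d -> der_part c m d = 0) -> forall d, span T d -> der_part c m d = 0.
Proof. exact: (row_comb_span_eq0 der_module basis_vec_derived). Qed.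

Variable tc : M -> translation.
Hypothesis tc_eval : forall x, x = lin_part c (tc x).1 + der_part c m (tc x).2.
Variable p : 'I_n -> M.
Hypothesis p_dec : forall i, p i = \sum_l c i l *: e l + m i.

Lemma translate_eval t :
  leval br p t = lin_part c (translate tc t).1 + der_part c m (translate tc t).2.
Proof.
elim: t => [x|i|t1 IH1 t2 IH2|a t IH|t1 IH1 t2 IH2] /=.
- exact: tc_eval.
- rewrite p_dec der_part_var; congr (_ + _); apply: eq_bigr => l _.
  by rewrite mxE coord_act_var.
- by rewrite IH1 IH2 lin_partD der_partD addrACA.
- rewrite IH lin_partZ der_partZ.
  by rewrite op_act_const !coord_act_const scalerDr.
- rewrite IH1 IH2 lin_part0 add0r !der_partD der_partN.
  rewrite br_gens_row_eval !ad_row_eval.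
  rewrite (linD (br_linearl Hlie _)) !(linD (br_linearr Hlie _)).
  rewrite (br_derived Hlie Hmeta (der_part_derived _) (der_part_derived _)) addr0.
  by rewrite (br_anticomm Hlie (der_part c m _)).
Qed.

Lemma leval_eq0 t : leval br p t = 0 <->
  lin_part c (translate tc t).1 = 0 /\ der_part c m (translate tc t).2 = 0.
Proof. by rewrite translate_eval; apply: lin_der_eq0. Qed.

End Evaluation.

Lemma derived_row d : derived d -> exists dl : 'rV[op_ring]_nbasis,
  forall c m, (forall i, derived (m i)) -> der_part c m dl = d.
Proof.
elim=> [j l | | x y _ [dx Hx] _ [dy Hy] | a x _ [dx Hx] | j x _ [dx Hx]].
- by exists (delta_mx 0 (br_index j l)) => c m _; rewrite der_part_br_index.
- by exists 0 => c m _; rewrite der_part0.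
- by exists (dx + dy) => c m Hm; rewrite der_partD Hx // Hy.
- exists (op_const (coord_const a) *: dx) => c m Hm.
  by rewrite der_partZ // op_act_const coord_act_const Hx.
- by exists (ad_var j *: dx) => c m Hm; rewrite der_partZ // op_act_ad Hx.
Qed.

Lemma const_translation : exists tc : M -> translation, forall x c m,
  (forall i, derived (m i)) -> x = lin_part c (tc x).1 + der_part c m (tc x).2.
Proof.
have [tc tcP] := choice_with_default (0, 0) (fun x (y : translation) =>
  forall c m, (forall i, derived (m i)) -> x = lin_part c y.1 + der_part c m y.2).
exists tc => x; apply: tcP.
have [a [d Dd ->]] := free_decomposable Hfree x.
have [dl Hdl] := derived_row Dd.
exists (\row_j coord_const (a j), dl) => c m Hm /=; rewrite Hdl //; congr (_ + _).
by rewrite lin_partE; apply: eq_bigr => j _; rewrite mxE coord_act_const.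
Qed.

End Translation.

Theorem lemma2p4 (K : fieldType) (r : nat) (hr : (0 < r)%N)
  (M : lmodType K) (br : M -> M -> M) (e : 'I_r -> M) :
  is_free_metabelian br e ->
  forall (n : nat) (S : lterm K M n -> Prop),
    exists S0 : seq (lterm K M n),
      (forall t, lmem S0 t -> S t) /\
      (forall p : 'I_n -> M,
         variety br S p <-> variety br (fun t => lmem S0 t) p).
Proof.
move=> Hfree n S.
have [tc tc_eval] := const_translation n Hfree.
have noeth_coord : noetherian (coord_ring K r n)^o := noetherian_polyn (@noetherian_field K).
have [S1 S1S HS1] := noetherian_finite_subfamily (LConst K n 0) (fun t => (translate tc t).1) S
  (noetherian_row noeth_coord).
have [S2 S2S HS2] := noetherian_finite_subfamily (LConst K n 0) (fun t => (translate tc t).2) S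
  (noetherian_row (noetherian_polyn noeth_coord)).
exists (S1 ++ S2); split=> [t /lmem_cat [/S1S|/S2S] // | p].
split=> [pS t /lmem_cat [/S1S|/S2S] | pS0 t St]; try exact: pS.
have [c [m Hm Hp]] := free_point_decomposition Hfree p.
have eval0 := leval_eq0 Hfree Hm (fun x => tc_eval x c m Hm) Hp.
have S0_eq0 t' : lmem (S1 ++ S2) t' -> lin_part e c (translate tc t').1 = 0 /\
    der_part br e c m (translate tc t').2 = 0.
  by move=> t'S0; apply/eval0/pS0.
apply/eval0; split.
- apply: (lin_part_span_eq0 _ (HS1 _ St)) => _ [t' t'S1 ->].
  by case: (S0_eq0 t') => //; apply/lmem_cat; left.
- apply: (der_part_span_eq0 Hfree Hm _ (HS2 _ St)) => _ [t' t'S2 ->].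
  by case: (S0_eq0 t') => //; apply/lmem_cat; right.
Qed.
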